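(* Let $G=(V,E)$ be a directed graph with positive edge weights (channel fees), let $n\in V$, let $f_{max}\ge 1$, and let $\mathcal{CH}\subseteq E$ be a set of edges out of $n$ (previously selected channels), each $Ch\in\mathcal{CH}$ having fee $f(Ch)\in[1,f_{max}]$. Let $n_i\in V\setminus\{n\}$ be such that the edge $(n,n_i)$ is not in $\mathcal{CH}$, and for $x\in[1,f_{max}]$ let $G_i^{x}$ denote the graph obtained from $G$ by adding the edge $(n,n_i)$ with weight $x$. Define $$\mathsf{TotalER}(x)= x\cdot \mathrm{ebc}_{G_i^{x}}((n,n_i)) + \sum_{Ch\in\mathcal{CH}} f(Ch)\cdot \mathrm{ebc}_{G_i^{x}}(Ch).$$ Then $$\max_{x\in[1,f_{max}]} \mathsf{TotalER}(x) \;\ge\; \sum_{Ch\in\mathcal{CH}} f(Ch)\cdot \mathrm{ebc}_{G}(Ch),$$ i.e., the objective of the greedy channel selection (adding a channel to $\mathcal{CH}$ with its best fee) is monotone non-decreasing.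
   Context: Shortest paths are minimum-total-weight directed paths. In a weighted directed graph $H$, for vertices $s\neq t$, $\sigma_{st}$ denotes the number of shortest paths from $s$ to $t$, and for an edge $e$, $\sigma_{st[e]}$ denotes the number of those shortest paths containing $e$. The edge betweenness centrality is $\mathrm{ebc}_{H}(e)=\sum_{s\neq t,\ \sigma_{st}\neq 0} \frac{\sigma_{st[e]}}{\sigma_{st}}$. The quantity $f(Ch)\cdot\mathrm{ebc}(Ch)$ is the expected reward of channel $Ch$ in a payment channel network where payments follow cheapest paths. *)

From mathcomp Require Import all_boot all_order all_algebra.
Set Implicit Arguments. Unset Strict Implicit. Unset Printing Implicit Defensive.
Import Order.TTheory GRing.Theory Num.Theory.
Local Open Scope ring_scope.

Section Graph.
Variables (R : realFieldType) (V Ed : finType) (src tgt : Ed -> V) (w : Ed -> R).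

Definition all_edge_seqs : seq (seq Ed) :=
  flatten [seq [seq tval t | t <- enum {: k.-tuple Ed}] | k <- iota 0 #|Ed|.+1].

Fixpoint walk_from (x : V) (p : seq Ed) : bool :=
  if p is e :: p' then (src e == x) && walk_from (tgt e) p' else true.

Definition is_path_st (s t : V) (p : seq Ed) : bool :=
  [&& uniq p, p != [::], walk_from s p & last s (map tgt p) == t].

Definition pweight (p : seq Ed) : R := \sum_(e <- p) w e.

Definition paths_st (s t : V) : seq (seq Ed) :=
  [seq p <- all_edge_seqs | is_path_st s t p].

Definition shortest (s t : V) (p : seq Ed) : bool :=
  is_path_st s t p && all (fun q => pweight p <= pweight q) (paths_st s t).

Definition sigma (s t : V) : nat := count (shortest s t) all_edge_seqs.

Definition sigma_e (s t : V) (e : Ed) : nat :=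
  count (fun p => shortest s t p && (e \in p)) all_edge_seqs.

Definition ebc (e : Ed) : R :=
  \sum_(s : V) \sum_(t : V | (s != t) && (sigma s t != 0%N))
     (sigma_e s t e)%:R / (sigma s t)%:R.

End Graph.

(* The graph G_i^x: G plus a new edge (None) from n to ni with weight x. *)
Definition add_src (V Ed : Type) (src : Ed -> V) (n : V) (e : option Ed) : V :=
  if e is Some e' then src e' else n.
Definition add_tgt (V Ed : Type) (tgt : Ed -> V) (ni : V) (e : option Ed) : V :=
  if e is Some e' then tgt e' else ni.
Definition add_w (R Ed : Type) (w : Ed -> R) (x : R) (e : option Ed) : R :=
  if e is Some e' then w e' else x.

(* Take x = fmax and compare both sides pair by pair, writing
   ebc(e) = sum_{s <> t} sigma_st[e] / sigma_st.  With positive weights a shortest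
   path never contains two edges leaving n, so B := sum_Ch f(Ch) sigma_st[Ch] <= fmax sigma_st.
   If the old shortest s-t paths stay shortest after adding (n, ni), then
   sigma'_st = sigma_st + k, where k counts the new shortest paths through (n, ni),
   sigma'_st[Ch] >= sigma_st[Ch], and the pair inequality is the mediant bound
   B / sigma_st <= (fmax k + B) / (sigma_st + k).  Otherwise every new shortest s-t path
   uses (n, ni), whose dependency is then 1, and the right-hand side is at least fmax. *)

From mathcomp Require Import all_boot all_order all_algebra.
From mathcomp Require Import lra.
Import Order.TTheory GRing.Theory Num.Theory.
Set Implicit Arguments. Unset Strict Implicit. Unset Printing Implicit Defensive.
Local Open Scope ring_scope.

Lemma uniq_all_edge_seqs (T : finType) : uniq (all_edge_seqs T).
Proof.
apply: allpairs_uniq_dep => [||[k1 t1] [k2 t2] _ _ /= eq_t12]; first exact: iota_uniq.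
  by move=> k _; exact: enum_uniq.
have eq_k12 : k1 = k2 by rewrite -(size_tuple t1) -(size_tuple t2) eq_t12.
by subst k2; congr existT; exact: val_inj.
Qed.

Lemma mem_all_edge_seqs (T : finType) (p : seq T) : uniq p -> p \in all_edge_seqs T.
Proof.
move=> p_uniq; apply/flatten_mapP; exists (size p).
  by rewrite mem_iota add0n ltnS -(card_uniqP p_uniq) max_card.
by apply/mapP; exists (in_tuple p); rewrite ?mem_enum.
Qed.

Lemma count_all_edge_seqs_map_Some (T : finType)
    (P : pred (seq T)) (Q : pred (seq (option T))) :
  (forall q, P q -> uniq q) -> (forall p, Q p -> None \notin p) ->
  (forall q, Q (map Some q) = P q) ->
  count Q (all_edge_seqs (option T)) = count P (all_edge_seqs T).
Proof.
move=> P_uniq Q_Some QP; rewrite -!size_filter.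
rewrite -(size_map (map Some) [seq q <- _ | P q]).
apply: perm_size; apply: uniq_perm.
- exact: filter_uniq (uniq_all_edge_seqs _).
- rewrite (map_inj_uniq (inj_map Some_inj)); exact: filter_uniq (uniq_all_edge_seqs _).
move=> p; rewrite mem_filter; apply/andP/mapP => [[Qp _] | [q]].
  have pK : map Some (pmap id p) = p.
    move: (Q_Some p Qp); elim: p {Qp} => [|[a|] p IHp] //=.
    by rewrite in_cons => /IHp ->.
  exists (pmap id p); rewrite // mem_filter -QP pK Qp mem_all_edge_seqs //.
  by rewrite P_uniq // -QP pK.
rewrite mem_filter => /andP[Pq _] ->; rewrite QP Pq mem_all_edge_seqs //.
by rewrite (map_inj_uniq Some_inj) P_uniq.
Qed.

Section Paths.
Variables (R : realFieldType) (V Ed : finType) (src tgt : Ed -> V) (w : Ed -> R).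

Lemma walk_from_cat v p q :
  walk_from src tgt v (p ++ q) =
  walk_from src tgt v p && walk_from src tgt (last v (map tgt p)) q.
Proof. by elim: p v => //= e p IHp v; rewrite IHp andbA. Qed.

Lemma mem_paths_st s t p : is_path_st src tgt s t p -> p \in paths_st src tgt s t.
Proof.
by move=> st_p; rewrite mem_filter st_p mem_all_edge_seqs //; case/and4P: st_p.
Qed.

Lemma exists_shortest s t p :
  is_path_st src tgt s t p -> exists q, shortest src tgt w s t q.
Proof.
move=> /mem_paths_st p_in.
pose weight (q : seq_sub (paths_st src tgt s t)) := pweight w (val q).
have [q _ q_min] := arg_minP weight (i0 := SeqSub p_in) (P := xpredT) isT.
exists (val q); apply/andP; split.
  by move: (valP q); rewrite mem_filter => /andP[].
by apply/allP => r r_in; exact: (q_min (SeqSub r_in)).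
Qed.

Lemma sigma_gt0 s t p : is_path_st src tgt s t p -> (0 < sigma src tgt w s t)%N.
Proof.
case/exists_shortest => q q_sh; rewrite -has_count; apply/hasP; exists q => //.
by rewrite mem_all_edge_seqs //; case/andP: q_sh => /and4P[].
Qed.

(* The guard [sigma s t != 0] in [ebc] is redundant: [k / 0 = 0]. *)
Lemma ebc_pairs e :
  ebc src tgt w e =
  \sum_s \sum_(t | s != t) (sigma_e src tgt w s t e)%:R / (sigma src tgt w s t)%:R.
Proof.
apply: eq_bigr => s _; rewrite big_mkcond [RHS]big_mkcond; apply: eq_bigr => t _.
by case: (s != t) => //=; case: eqP => [-> | _] //=; rewrite invr0 mulr0.
Qed.

Lemma sum_mul_ebc (I : finType) (P : pred I) (a : I -> R) (f : I -> Ed) :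
  \sum_(i | P i) a i * ebc src tgt w (f i) =
  \sum_s \sum_(t | s != t) \sum_(i | P i)
     a i * ((sigma_e src tgt w s t (f i))%:R / (sigma src tgt w s t)%:R).
Proof.
under eq_bigr => i _ do rewrite ebc_pairs mulr_sumr.
rewrite exchange_big; apply: eq_bigr => s _.
under eq_bigr => i _ do rewrite mulr_sumr.
by rewrite exchange_big.
Qed.

Hypothesis w_gt0 : forall e, 0 < w e.

(* If [src e1 = src e2], dropping [e1 :: q] gives a strictly lighter s-t path. *)
Lemma shortest_src_neq s t p e1 q e2 r :
  shortest src tgt w s t (p ++ e1 :: q ++ e2 :: r) -> src e1 != src e2.
Proof.
case/andP=> /and4P[p_uniq _ p_walk p_last] /allP p_min; apply/eqP => eq_src.
pose p' := p ++ e2 :: r.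
have st_p' : is_path_st src tgt s t p'.
  apply/and4P; split.
  - apply: subseq_uniq p_uniq; rewrite subseq_cat2l.
    exact: (suffix_subseq (e1 :: q) (e2 :: r)).
  - by rewrite -size_eq0 size_cat /= addnS.
  - move: p_walk; rewrite !walk_from_cat /= walk_from_cat /= -eq_src.
    by case/and5P=> -> -> _ _ ->.
  - by move: p_last; rewrite !map_cat !last_cat /= map_cat last_cat.
have := p_min p' (mem_paths_st st_p').
rewrite /pweight !big_cat !big_cons big_cat big_cons /=.
have : 0 <= \sum_(e <- q) w e by apply: sumr_ge0 => e _; exact: ltW.
by have := w_gt0 e1; lra.
Qed.

Lemma shortest_src_inj s t p : shortest src tgt w s t p -> {in p &, injective src}.
Proof.
move=> p_sh e1 e2 e1_in e2_in eq_src; apply/eqP/negPn/negP => neq_e.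
case/splitPr: e1_in p_sh e2_in => p1 p2 p_sh.
rewrite mem_cat in_cons (eq_sym e2) (negbTE neq_e) /=.
case/orP=> e2_in; case/splitPr: e2_in p_sh => q1 q2 p_sh.
  by move: p_sh; rewrite -catA /= => /shortest_src_neq; rewrite eq_src eqxx.
by move/shortest_src_neq: p_sh; rewrite eq_src eqxx.
Qed.

Lemma sum_sigma_e_out_le v (A : {set Ed}) s t :
  (forall e, e \in A -> src e = v) ->
  (\sum_(e in A) sigma_e src tgt w s t e <= sigma src tgt w s t)%N.
Proof.
move=> A_out; rewrite /sigma_e /sigma.
elim: (all_edge_seqs Ed) => [|p ps IHps] /=; first by rewrite big1.
rewrite big_split /= leq_add //.
case p_sh: (shortest src tgt w s t p) => /=; last by rewrite big1.
case: (pickP [pred e in A | e \in p]) => [e /andP[e_A e_p] | no_e].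
  rewrite (bigD1 e) //= e_p big1 // => e' /andP[e'_A neq_e'].
  apply/eqP; rewrite eqb0; apply: contra neq_e' => e'_p; apply/eqP.
  by apply: (shortest_src_inj p_sh e'_p e_p); rewrite !A_out.
by rewrite big1 // => e e_A; move: (no_e e); rewrite /= e_A /= => ->.
Qed.

Lemma sum_weighted_sigma_e_le v x (A : {set Ed}) s t : 0 <= x ->
  (forall e, e \in A -> src e = v /\ w e <= x) ->
  \sum_(e in A) w e * (sigma_e src tgt w s t e)%:R <= x * (sigma src tgt w s t)%:R.
Proof.
move=> x_ge0 A_out.
apply: le_trans (_ : \sum_(e in A) x * (sigma_e src tgt w s t e)%:R <= _).
  by apply: ler_sum => e /A_out[_ w_le]; exact: ler_wpM2r.
rewrite -mulr_sumr -natr_sum ler_wpM2l // ler_nat.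
by apply: (sum_sigma_e_out_le (v := v)) => e /A_out[].
Qed.

End Paths.

Lemma ler_mediant (R : realFieldType) (x b a k : R) :
  0 < a -> 0 <= k -> b <= x * a -> b / a <= (x * k + b) / (a + k).
Proof.
move=> a_gt0 k_ge0 b_le; have ak_gt0 : 0 < a + k by exact: ltr_wpDr.
rewrite ler_pdivlMr // mulrDr divfK ?gt_eqF // addrC lerD2r ler_wpM2r //.
by rewrite ler_pdivrMr.
Qed.

Section Extension.
Variables (R : realFieldType) (V Ed : finType) (src tgt : Ed -> V) (w : Ed -> R).
Variables (n ni : V) (x : R).
Local Notation src' := (add_src src n).
Local Notation tgt' := (add_tgt tgt ni).
Local Notation w' := (add_w w x).

Lemma walk_from_map_Some v q :
  walk_from src' tgt' v (map Some q) = walk_from src tgt v q.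
Proof. by elim: q v => //= e q IHq v; rewrite IHq. Qed.

Lemma is_path_st_map_Some s t q :
  is_path_st src' tgt' s t (map Some q) = is_path_st src tgt s t q.
Proof.
rewrite /is_path_st (map_inj_uniq Some_inj) walk_from_map_Some -map_comp.
by case: q.
Qed.

Lemma pweight_map_Some q : pweight w' (map Some q) = pweight w q.
Proof. by rewrite /pweight big_map. Qed.

Lemma shortest_map_Some s t q :
  shortest src' tgt' w' s t (map Some q) -> shortest src tgt w s t q.
Proof.
rewrite /shortest is_path_st_map_Some => /andP[-> /allP q_min] /=.
apply/allP => r; rewrite mem_filter -!pweight_map_Some => /andP[st_r _].
by apply: q_min; rewrite mem_paths_st ?is_path_st_map_Some.
Qed.

(* All shortest s-t paths of G have the same weight, so one of them stays
   shortest in the extended graph iff all of them do. *)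
Lemma shortest_map_SomeE s t q :
  shortest src tgt w s t q -> shortest src' tgt' w' s t (map Some q) ->
  forall r, shortest src' tgt' w' s t (map Some r) = shortest src tgt w s t r.
Proof.
move=> /andP[st_q /allP q_min] /andP[_ /allP q'_min] r.
apply/idP/idP => [|/andP[st_r /allP r_min]]; first exact: shortest_map_Some.
rewrite /shortest is_path_st_map_Some st_r /=; apply/allP => p p_in.
have eq_w : pweight w r = pweight w q.
  by apply/eqP; rewrite eq_le r_min ?q_min ?mem_paths_st.
by rewrite pweight_map_Some eq_w -pweight_map_Some q'_min.
Qed.

Lemma sigma_add_edge s t :
  sigma src' tgt' w' s t =
  (count (fun q => shortest src' tgt' w' s t (map Some q)) (all_edge_seqs Ed)
   + sigma_e src' tgt' w' s t None)%N.
Proof.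
rewrite /sigma /sigma_e -size_filter -(count_predC (fun p => None \in p)).
rewrite !count_filter addnC; congr addn; last by apply: eq_count => p; rewrite /= andbC.
apply: count_all_edge_seqs_map_Some.
- by move=> q /shortest_map_Some/andP[/and4P[]].
- by move=> p /andP[].
by move=> q /=; rewrite andbC; case: mapP => [[] | _]; rewrite ?andbT.
Qed.

Lemma count_shortest_map_Some_le s t e :
  (count (fun q => shortest src' tgt' w' s t (map Some q) && (e \in q))
     (all_edge_seqs Ed) <= sigma_e src' tgt' w' s t (Some e))%N.
Proof.
rewrite -(@count_all_edge_seqs_map_Some _ _
  (fun p => [&& shortest src' tgt' w' s t p, Some e \in p & None \notin p])).
- by apply: sub_count => p /and3P[-> ->].
- by move=> q /andP[/shortest_map_Some/andP[/and4P[]]].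
- by move=> p /and3P[].
by move=> q; rewrite (mem_map Some_inj); case: mapP => [[] | _]; rewrite ?andbT.
Qed.

Section FixedPair.
Variables (s t : V) (q : seq Ed).
Hypothesis q_sh : shortest src tgt w s t q.

Lemma sigma_add_edge_kept :
  shortest src' tgt' w' s t (map Some q) ->
  sigma src' tgt' w' s t = (sigma src tgt w s t + sigma_e src' tgt' w' s t None)%N.
Proof.
move=> q'_sh; rewrite sigma_add_edge /sigma; congr addn.
apply: eq_count => r; exact: (shortest_map_SomeE q_sh q'_sh).
Qed.

Lemma sigma_e_add_edge_kept e :
  shortest src' tgt' w' s t (map Some q) ->
  (sigma_e src tgt w s t e <= sigma_e src' tgt' w' s t (Some e))%N.
Proof.
move=> q'_sh; apply: leq_trans (count_shortest_map_Some_le s t e).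
by apply/eq_leq/eq_count => r; rewrite /= (shortest_map_SomeE q_sh q'_sh).
Qed.

Lemma sigma_e_add_edge_bypass :
  ~~ shortest src' tgt' w' s t (map Some q) ->
  sigma_e src' tgt' w' s t None = sigma src' tgt' w' s t.
Proof.
move=> q'_nsh; rewrite sigma_add_edge (_ : count _ _ = 0%N) //.
apply/eqP; rewrite eqn0Ngt -has_count; apply/hasP => -[r _ r'_sh].
have r_sh := shortest_map_Some r'_sh.
by rewrite (shortest_map_SomeE r_sh r'_sh q) q_sh in q'_nsh.
Qed.

End FixedPair.

Lemma pair_reward_le (CH : {set Ed}) s t :
  (forall e, 0 < w e) -> 0 <= x -> (forall e, e \in CH -> src e = n /\ w e <= x) ->
  \sum_(e in CH) w e * ((sigma_e src tgt w s t e)%:R / (sigma src tgt w s t)%:R) <=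
  x * ((sigma_e src' tgt' w' s t None)%:R / (sigma src' tgt' w' s t)%:R)
  + \sum_(e in CH) w e
      * ((sigma_e src' tgt' w' s t (Some e))%:R / (sigma src' tgt' w' s t)%:R).
Proof.
move=> w_gt0 x_ge0 CH_out.
set B := \sum_(e in CH) w e * (sigma_e src tgt w s t e)%:R.
have -> : \sum_(e in CH) w e * ((sigma_e src tgt w s t e)%:R / (sigma src tgt w s t)%:R) =
          B / (sigma src tgt w s t)%:R.
  by rewrite mulr_suml; apply: eq_bigr => e _; rewrite mulrA.
have B_le : B <= x * (sigma src tgt w s t)%:R.
  exact: sum_weighted_sigma_e_le CH_out.
have new_ge0 : 0 <= \sum_(e in CH) w e
      * ((sigma_e src' tgt' w' s t (Some e))%:R / (sigma src' tgt' w' s t)%:R).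
  by apply: sumr_ge0 => e _; rewrite mulr_ge0 ?divr_ge0 // ltW.
have [sigma0 | sigma_pos] := posnP (sigma src tgt w s t).
  by rewrite sigma0 invr0 mulr0 addr_ge0 // mulr_ge0 // divr_ge0.
have /hasP[q _ q_sh] : has (shortest src tgt w s t) (all_edge_seqs Ed).
  by rewrite has_count.
have [q'_sh | q'_nsh] := boolP (shortest src' tgt' w' s t (map Some q)).
  rewrite (sigma_add_edge_kept q_sh q'_sh) natrD.
  have sigma_posR : 0 < (sigma src tgt w s t)%:R :> R by rewrite ltr0n.
  apply: le_trans (ler_mediant sigma_posR (ler0n _ _) B_le) _.
  rewrite mulrDl; apply: lerD; first by rewrite mulrA.
  rewrite mulr_suml ler_sum // => e _.
  rewrite -mulrA ler_wpM2l ?(ltW (w_gt0 e)) // ler_wpM2r ?invr_ge0 ?addr_ge0 //.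
  by rewrite ler_nat (sigma_e_add_edge_kept q_sh e q'_sh).
have sigma'_pos : (0 < sigma src' tgt' w' s t)%N.
  apply: (sigma_gt0 w' (p := map Some q)).
  by rewrite is_path_st_map_Some; case/andP: q_sh.
rewrite (sigma_e_add_edge_bypass q_sh q'_nsh) divff ?pnatr_eq0 -?lt0n // mulr1.
apply: (le_trans (y := x)); first by rewrite ler_pdivrMr ?ltr0n.
by rewrite lerDl.
Qed.

End Extension.

Theorem theorem4 (R : realFieldType) (V Ed : finType)
  (src tgt : Ed -> V) (w : Ed -> R) (n ni : V) (fmax : R) (CH : {set Ed}) :
  (forall e : Ed, 0 < w e) ->
  1 <= fmax ->
  (forall Ch : Ed, Ch \in CH -> src Ch = n /\ (1 <= w Ch <= fmax)) ->
  ni != n ->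
  (forall Ch : Ed, Ch \in CH -> tgt Ch != ni) ->
  exists2 x : R, 1 <= x <= fmax &
    \sum_(Ch in CH) w Ch * ebc src tgt w Ch <=
      x * ebc (add_src src n) (add_tgt tgt ni) (add_w w x) None
      + \sum_(Ch in CH) w Ch
          * ebc (add_src src n) (add_tgt tgt ni) (add_w w x) (Some Ch).
Proof.
move=> w_gt0 fmax_ge1 CH_out _ _; exists fmax; first by rewrite fmax_ge1 lexx.
rewrite !sum_mul_ebc ebc_pairs !mulr_sumr -big_split ler_sum // => s _.
rewrite mulr_sumr -big_split ler_sum // => t _.
apply: pair_reward_le => // [|e /CH_out[-> /andP[_ ->]] //].
exact: le_trans ler01 fmax_ge1.
Qed.
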